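(* Let $c\in(0,1)$. There is a constant $C=C(c)>0$ such that the following holds. For $0<\beta_1<\beta_2$ let $g_{\mathrm{Foot},\beta_1,\beta_2}$ be the football soliton of the context, regarded via the map $\Psi_{\beta_1,\beta_2}$ of the context as a symmetric 2-tensor on an open subset of $\mathbb{R}^2\setminus\{0\}\cong\mathbb{C}^*$, and let $p_{\beta_1,\beta_2}\in S^2$ be the unique point with moment coordinate $\tau=\beta_1$ and angle $\theta=0$. Let $g_{\mathrm{Cyl}}=\frac{dx\otimes dx+dy\otimes dy}{x^2+y^2}$ on $\mathbb{R}^2\setminus\{0\}$. Then, as $\beta_1/\beta_2\to c$ and $\beta_2\to0$, the tensors $\frac{1}{\beta_1^2}g_{\mathrm{Foot},\beta_1,\beta_2}$ converge to $C\,g_{\mathrm{Cyl}}$ in $C^k$ on compact subsets of $\mathbb{R}^2\setminus\{0\}$ for every $k\ge0$, with $\Psi_{\beta_1,\beta_2}(p_{\beta_1,\beta_2})=e^0=1$; in particular $\big(\frac{1}{\beta_1^2}g_{\mathrm{Foot},\beta_1,\beta_2},p_{\beta_1,\beta_2}\big)\to(C g_{\mathrm{Cyl}},1)$ in the pointed sense.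
   Context: Regard $S^2=\mathbb{C}\cup\{\infty\}$ as the Riemann sphere with $N=\{z=0\}$ and $S=\{z=\infty\}$, and write $z=|z|e^{i\theta}$. For $0<\beta_1<\beta_2$, the football soliton $g_{\mathrm{Foot},\beta_1,\beta_2}$ is the unique Riemannian metric on $S^2\setminus\{N,S\}$, compatible with the complex structure, with a conical singularity of angle $2\pi\beta_1$ at $N$ and of angle $2\pi\beta_2$ at $S$, of total area $2\pi(\beta_1+\beta_2)$, which is a gradient Ricci soliton in the sense that its Kähler form $\omega$ satisfies $\mathrm{Ric}\,\omega=\omega-\mathcal{L}_X\omega+2\pi(1-\beta_1)\delta_N+2\pi(1-\beta_2)\delta_S$ for a gradient vector field $X$. The metric is rotationally symmetric, so on $\mathbb{C}^*$ one has $\omega=\sqrt{-1}\partial\bar\partial f(s)$ with $s=\log|z|^2$ and $f$ strictly convex; the moment coordinate is $\tau=f'(s)$, normalized (by adding a linear function of $s$ to $f$) so that $\tau\to0$ at $N$; then $\tau$ takes values in $(0,\beta_1+\beta_2)$. Let $a=a(\beta_1,\beta_2)$ be the unique number in $(0,1/\beta_1)$ with $a\beta_1-1+(a\beta_2+1)e^{-a(\beta_1+\beta_2)}=0$. Let $b=b(c)$ be the unique positive solution $x\in(0,1/c)$ of $cx-1+(x+1)e^{-x(1+c)}=0$, and $B=B(c)=1-(1+b)e^{-b}>0$. The map $\Psi_{\beta_1,\beta_2}:S^2\setminus\{N,S\}\to\mathbb{C}^*\cong\mathbb{R}^2\setminus\{0\}$ sends the point with moment coordinate $\tau$ and angle $\theta$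 to $\exp\big(a^2(\beta_1-\tau)/(2B)+i\theta\big)$; tensors are transported via this map. *)

From Stdlib Require Import Reals Lra List.
From Coquelicot Require Import Coquelicot.
Open Scope R_scope.

(* Points of R^2 = C, z = x + i y  ~  (x, y). *)
Definition pt : Type := (R * R)%type.
Definition nrm2 (p : pt) : R := fst p ^ 2 + snd p ^ 2.
Definition dot (v w : pt) : R := fst v * fst w + snd v * snd w.

(* A (symmetric 2-)tensor field on (an open subset of) R^2:
   T p v w = value of the tensor at the point p on the vectors v, w. *)
Definition tensor2 : Type := pt -> pt -> pt -> R.

(* The football soliton, in the rotationally symmetric description of
   the context: omega = sqrt(-1) dd^bar f(s), s = log|z|^2, on C^*.     *)

Definition tau (f : R -> R) (z : pt) : R := Derive_n f 1 (ln (nrm2 z)).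

(* The Riemannian metric g with Kaehler form omega = i dd^bar f(s), i.e.
   omega = g(J.,.):  g = 2 f''(s) (dx^2 + dy^2) / |z|^2. *)
Definition g_foot (f : R -> R) : tensor2 :=
  fun z v w => 2 * Derive_n f 2 (ln (nrm2 z)) / nrm2 z * dot v w.

(* f is a potential of the football soliton with cone angles 2 pi b1 at
   N = {z = 0} and 2 pi b2 at S = {z = oo}:
   - f smooth and strictly convex;
   - moment coordinate normalised: tau -> 0 at N, and tau -> b1 + b2 at S
     (total area 2 pi (b1 + b2));
   - gradient Ricci soliton equation Ric omega = omega - L_X omega on C^*,
     X = lam * (radial holomorphic gradient field), which for
     omega = i dd^bar f(s) reads  -log f'' = f - lam f' + (pluriharmonic
     radial function al s + be);
   - conical singularities of angles 2 pi b1 at N and 2 pi b2 at S: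
     d f''/d tau = f'''/f'' tends to b1 at N and to -b2 at S.            *)
Definition is_football_potential (b1 b2 : R) (f : R -> R) : Prop :=
  (forall (n : nat) (s : R), ex_derive_n f n s) /\
  (forall s : R, 0 < Derive_n f 2 s) /\
  is_lim (Derive_n f 1) m_infty (Finite 0) /\
  is_lim (Derive_n f 1) p_infty (Finite (b1 + b2)) /\
  (exists lam al be : R, forall s : R,
      - ln (Derive_n f 2 s) = f s - lam * Derive_n f 1 s + al * s + be) /\
  is_lim (fun s => Derive_n f 3 s / Derive_n f 2 s) m_infty (Finite b1) /\
  is_lim (fun s => Derive_n f 3 s / Derive_n f 2 s) p_infty (Finite (- b2)).

Definition is_a (b1 b2 a : R) : Prop :=
  0 < a < / b1 /\ a * b1 - 1 + (a * b2 + 1) * exp (- (a * (b1 + b2))) = 0.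

Definition is_b (c x : R) : Prop :=
  0 < x < / c /\ c * x - 1 + (x + 1) * exp (- (x * (1 + c))) = 0.

Definition Bc (b : R) : R := 1 - (1 + b) * exp (- b).

(* The map Psi: the point with moment coordinate tau and angle theta
   (theta = arg z) goes to exp(a^2 (b1 - tau)/(2B) + i theta). *)
Definition Psi (a B b1 : R) (f : R -> R) (z : pt) : pt :=
  let h := a ^ 2 * (b1 - tau f z) / (2 * B) in
  let r := sqrt (nrm2 z) in
  (exp h * (fst z / r), exp h * (snd z / r)).

(* partial derivative: true = d/dx, false = d/dy *)
Definition pd (d : bool) (F : pt -> R) : pt -> R :=
  fun p => if d then Derive (fun t => F (t, snd p)) (fst p)
           else Derive (fun t => F (fst p, t)) (snd p).

Definition pds (l : list bool) (F : pt -> R) : pt -> R :=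
  fold_right pd F l.

Definition jac (Phi : pt -> pt) (z v : pt) : pt :=
  (fst v * pd true (fun p => fst (Phi p)) z + snd v * pd false (fun p => fst (Phi p)) z,
   fst v * pd true (fun p => snd (Phi p)) z + snd v * pd false (fun p => snd (Phi p)) z).

Definition is_pushforward (Phi : pt -> pt) (g T : tensor2) : Prop :=
  forall z : pt, z <> (0, 0) ->
    forall v w : pt, T (Phi z) (jac Phi z v) (jac Phi z w) = g z v w.

Definition ebas (i : bool) : pt := if i then (1, 0) else (0, 1).
Definition comp (T : tensor2) (i j : bool) : pt -> R :=
  fun x => T x (ebas i) (ebas j).

Definition g_cyl : tensor2 := fun z v w => dot v w / nrm2 z.

(* C^k convergence on compact subsets of R^2 \ {0}, for every k: every
   partial derivative of every component converges uniformly on every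
   closed annulus r1 <= |x| <= r2 (every compact subset of R^2 \ {0} lies
   in such an annulus, and these annuli are compact). *)
Definition Cinf_loc_conv (Tn : nat -> tensor2) (T : tensor2) : Prop :=
  forall r1 r2 : R, 0 < r1 -> r1 < r2 ->
  forall (l : list bool) (i j : bool) (eps : R), 0 < eps ->
  exists N : nat, forall n : nat, (N <= n)%nat ->
    forall x : pt, r1 <= sqrt (nrm2 x) <= r2 ->
      Rabs (pds l (comp (Tn n) i j) x - pds l (comp T i j) x) < eps.

From Pilot Require Import Defs.
From Stdlib Require Import Reals Lra Lia List FunctionalExtensionality.
From Coquelicot Require Import Coquelicot.
Open Scope R_scope.

(* Differentiating the soliton equation gives [f''' = f'' (lam f'' - f' - al)].
   The cone angle at [N] forces [al = -b1] and makes [f''] decay at [N], so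
   [f'' = P(f')] with [P' = lam P - tau + b1], [P 0 = 0]; the cone angle at [S]
   forces [P (b1 + b2) = 0], which is the equation defining [a], so [lam = a]
   and [f''] is an explicit function of the moment coordinate [tau].
   Since [Psi] maps the level set of [tau] onto the circle
   [|y|^2 = exp (a^2 (b1 - tau) / B)], the rescaled pushforward metric is an
   explicit expression in [y], [1/|y|^2], [ln |y|^2], [|y|^(-2B/a)] and [1/Q],
   [Q = a^2 f''], with coefficients [eps = 1/a], [E = (1 - a b1) e^(a b1)] and
   [kappa = 1/(a b1)^2].  As [b1/b2 -> c], [a b2] tends to the root [b] of the
   limiting equation, so [eps -> 0], [E -> 1 - B], [kappa -> 1/(b c)^2], hence
   [Q -> B] and the metric tends to [2 B/(b c)^2 g_Cyl].  Partial derivatives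
   of such expressions are again such expressions, and each of them converges
   uniformly on annuli, which gives [C^k] convergence for every [k]. *)

Lemma is_derive_continuous (g : R -> R) x l : is_derive g x l -> continuous g x.
Proof. intro H. apply (ex_derive_continuous (V := R_NormedModule)). now exists l. Qed.

Lemma is_derive_continuity_pt (g : R -> R) x l : is_derive g x l -> continuity_pt g x.
Proof. intro H. apply continuity_pt_filterlim. now apply (is_derive_continuous g x l). Qed.

Lemma Derive_is_derive (g : R -> R) x l : is_derive g x l -> Derive (fun y : R => g y) x = l.
Proof. exact (is_derive_unique g x l). Qed.

Lemma mean_value (g dg : R -> R) u v : u < v ->
  (forall x, u <= x <= v -> is_derive g x (dg x)) ->
  exists c, g v - g u = dg c * (v - u) /\ u < c < v.
Proof. intros Huv Hd. apply MVT_cor2; auto. intros c Hc. now apply is_derive_Reals, Hd. Qed.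

Lemma lt_of_derive_pos (g dg : R -> R) u v : u < v ->
  (forall x, u <= x <= v -> is_derive g x (dg x)) ->
  (forall x, u < x < v -> 0 < dg x) -> g u < g v.
Proof.
  intros Huv Hd Hp. destruct (mean_value g dg u v Huv Hd) as [c [He Hc]].
  specialize (Hp c Hc). nra.
Qed.

Lemma lt_of_derive_neg (g dg : R -> R) u v : u < v ->
  (forall x, u <= x <= v -> is_derive g x (dg x)) ->
  (forall x, u < x < v -> dg x < 0) -> g v < g u.
Proof.
  intros Huv Hd Hn.
  enough (- g u < - g v) by lra.
  apply (lt_of_derive_pos (fun t => - g t) (fun t => - dg t)); auto.
  - intros x Hx. now apply (is_derive_opp g), Hd.
  - intros x Hx. specialize (Hn x Hx). lra.
Qed.

Lemma le_of_derive_nonneg (g dg : R -> R) u v : u <= v ->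
  (forall x, u <= x <= v -> is_derive g x (dg x)) ->
  (forall x, u < x < v -> 0 <= dg x) -> g u <= g v.
Proof.
  intros Huv Hd Hp. destruct (Req_dec u v) as [->|Hne]; [lra|].
  destruct (mean_value g dg u v ltac:(lra) Hd) as [c [He Hc]].
  specialize (Hp c Hc). nra.
Qed.

Lemma eq_of_derive_zero (g : R -> R) :
  (forall x, is_derive g x 0) -> forall u v, g u = g v.
Proof.
  intros Hd u v. destruct (Rtotal_order u v) as [h|[->|h]]; [| reflexivity |].
  - destruct (mean_value g (fun _ => 0) u v h) as [c [Hc _]]; auto. lra.
  - destruct (mean_value g (fun _ => 0) v u h) as [c [Hc _]]; auto. lra.
Qed.

Lemma is_lim_seq_eventually_lt (u : nat -> R) (l m : R) :
  is_lim_seq u l -> l < m -> eventually (fun n => u n < m).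
Proof. intros H Hl. apply (H (fun x => x < m)). exact (open_lt m l Hl). Qed.

Lemma is_lim_seq_eventually_gt (u : nat -> R) (l m : R) :
  is_lim_seq u l -> m < l -> eventually (fun n => m < u n).
Proof. intros H Hl. apply (H (fun x => m < x)). exact (open_gt m l Hl). Qed.

(** * The equation defining [b] *)

Definition Fb (c x : R) := c * x - 1 + (x + 1) * exp (- (x * (1 + c))).
Definition dFb (c x : R) := c - (c + x * (1 + c)) * exp (- (x * (1 + c))).
Definition d2Fb (c x : R) := (1 + c) * (x * (1 + c) - (1 - c)) * exp (- (x * (1 + c))).

Lemma Fb_derive c x : is_derive (Fb c) x (dFb c x).
Proof. unfold Fb, dFb. auto_derive; auto. ring. Qed.

Lemma dFb_derive c x : is_derive (dFb c) x (d2Fb c x).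
Proof. unfold dFb, d2Fb. auto_derive; auto. ring. Qed.

Lemma Fb_continuous c : continuity (Fb c).
Proof. intro x. exact (is_derive_continuity_pt _ _ _ (Fb_derive c x)). Qed.

Lemma Fb_continuous_param x c : continuity_pt (fun c' => Fb c' x) c.
Proof.
  apply (is_derive_continuity_pt _ _ (x - (x + 1) * x * exp (- (x * (1 + c))))).
  unfold Fb. auto_derive; auto. ring.
Qed.

Lemma Fb_0 c : Fb c 0 = 0.
Proof. unfold Fb. rewrite Rmult_0_l, Ropp_0, exp_0. ring. Qed.

Lemma dFb_0 c : dFb c 0 = 0.
Proof. unfold dFb. rewrite Rmult_0_l, Ropp_0, exp_0. ring. Qed.

(* [Fb c] vanishes to second order at 0 and is concave on the left and convex
   on the right of [x0], so it has exactly one other zero, which lies beyond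
   [x0] and where [Fb c] crosses from negative to positive. *)
Section FbShape.
Variable c : R.
Hypothesis Hc : 0 < c < 1.
Let x0 := (1 - c) / (1 + c).

Lemma x0_pos : 0 < x0.
Proof. unfold x0. apply Rdiv_lt_0_compat; lra. Qed.

Lemma d2Fb_neg x : x < x0 -> d2Fb c x < 0.
Proof.
  intro H. unfold d2Fb. pose proof (exp_pos (- (x * (1 + c)))).
  assert (x * (1 + c) < 1 - c).
  { unfold x0 in H. apply (Rmult_lt_compat_r (1 + c)) in H; [|lra].
    field_simplify in H; lra. }
  assert ((1 + c) * (x * (1 + c) - (1 - c)) < 0) by nra. nra.
Qed.

Lemma d2Fb_pos x : x0 < x -> 0 < d2Fb c x.
Proof.
  intro H. unfold d2Fb. pose proof (exp_pos (- (x * (1 + c)))).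
  assert (1 - c < x * (1 + c)).
  { unfold x0 in H. apply (Rmult_lt_compat_r (1 + c)) in H; [|lra].
    field_simplify in H; lra. }
  assert (0 < (1 + c) * (x * (1 + c) - (1 - c))) by nra. nra.
Qed.

Lemma dFb_pos_of_neg x : x < 0 -> 0 < dFb c x.
Proof.
  intro H. rewrite <- (dFb_0 c). pose proof x0_pos.
  apply (lt_of_derive_neg _ (d2Fb c)); auto.
  - intros t _. apply dFb_derive.
  - intros t Ht. apply d2Fb_neg. lra.
Qed.

Lemma dFb_neg x : 0 < x <= x0 -> dFb c x < 0.
Proof.
  intro H. rewrite <- (dFb_0 c).
  apply (lt_of_derive_neg _ (d2Fb c)); try lra.
  - intros t _. apply dFb_derive.
  - intros t Ht. apply d2Fb_neg. lra.
Qed.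

Lemma dFb_lt u v : x0 <= u < v -> dFb c u < dFb c v.
Proof.
  intro H. apply (lt_of_derive_pos _ (d2Fb c)); try lra.
  - intros t _. apply dFb_derive.
  - intros t Ht. apply d2Fb_pos. lra.
Qed.

Lemma Fb_neg_of_neg x : x < 0 -> Fb c x < 0.
Proof.
  intro H. rewrite <- (Fb_0 c).
  apply (lt_of_derive_pos _ (dFb c)); auto.
  - intros t _. apply Fb_derive.
  - intros t Ht. apply dFb_pos_of_neg. lra.
Qed.

Lemma Fb_neg x : 0 < x <= x0 -> Fb c x < 0.
Proof.
  intro H. rewrite <- (Fb_0 c).
  apply (lt_of_derive_neg _ (dFb c)); try lra.
  - intros t _. apply Fb_derive.
  - intros t Ht. apply dFb_neg. lra.
Qed.

Lemma Fb_root_gt y : Fb c y = 0 -> y <> 0 -> x0 < y /\ 0 < dFb c y.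
Proof.
  intros Hy Hn. pose proof x0_pos.
  assert (Hy0 : x0 < y).
  { destruct (Rlt_or_le x0 y) as [h|h]; auto.
    destruct (Rlt_or_le y 0) as [h'|h'].
    - pose proof (Fb_neg_of_neg y h'). lra.
    - pose proof (Fb_neg y ltac:(lra)). lra. }
  split; auto.
  destruct (Rlt_or_le 0 (dFb c y)) as [h|h]; auto. exfalso.
  assert (Fb c y < Fb c x0).
  { apply (lt_of_derive_neg _ (dFb c)); auto.
    - intros t _. apply Fb_derive.
    - intros t Ht. pose proof (dFb_lt t y ltac:(lra)). lra. }
  pose proof (Fb_neg x0 ltac:(lra)). lra.
Qed.

Lemma Fb_pos_after_root y t : Fb c y = 0 -> y <> 0 -> y < t -> 0 < Fb c t.
Proof.
  intros Hy Hn Ht. destruct (Fb_root_gt y Hy Hn) as [H1 H2].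
  rewrite <- Hy. apply (lt_of_derive_pos _ (dFb c)); auto.
  - intros s _. apply Fb_derive.
  - intros s Hs. pose proof (dFb_lt y s ltac:(lra)). lra.
Qed.

Lemma Fb_root_unique y1 y2 :
  Fb c y1 = 0 -> y1 <> 0 -> Fb c y2 = 0 -> y2 <> 0 -> y1 = y2.
Proof.
  intros H1 N1 H2 N2. destruct (Rtotal_order y1 y2) as [h|[h|h]]; auto.
  - pose proof (Fb_pos_after_root y1 y2 H1 N1 h). lra.
  - pose proof (Fb_pos_after_root y2 y1 H2 N2 h). lra.
Qed.

Lemma Fb_neg_before_root y t : Fb c y = 0 -> y <> 0 -> 0 < t < y -> Fb c t < 0.
Proof.
  intros Hy Hn Ht. pose proof x0_pos.
  destruct (Rle_or_lt t x0) as [h|h]; [apply Fb_neg; lra|].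
  destruct (Rlt_or_le (Fb c t) 0) as [h'|h']; auto. exfalso.
  pose proof (Fb_neg x0 ltac:(lra)).
  destruct (IVT_gen (Fb c) x0 t 0 (Fb_continuous c)) as [z [Hz Hz0]].
  { rewrite Rmin_left, Rmax_right by lra. lra. }
  rewrite Rmin_left, Rmax_right in Hz by lra.
  assert (z = y) by (apply Fb_root_unique; auto; lra). lra.
Qed.
End FbShape.

(* [Fb c] changes sign across [b], and this persists for nearby parameters. *)
Lemma Fb_root_lim c b (cn xn : nat -> R) :
  0 < c < 1 -> (forall n, 0 < cn n < 1) -> is_lim_seq cn c ->
  Fb c b = 0 -> 0 < b -> (forall n, Fb (cn n) (xn n) = 0 /\ 0 < xn n) ->
  is_lim_seq xn b.
Proof.
  intros Hc Hcn Hlim Hb Hb0 Hx. apply is_lim_seq_spec. intro eps.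
  set (d := Rmin (eps / 2) (b / 2)).
  assert (Hd : 0 < d /\ d < eps /\ d < b).
  { pose proof (cond_pos eps). unfold d. repeat split.
    - apply Rmin_glb_lt; lra.
    - pose proof (Rmin_l (eps / 2) (b / 2)). lra.
    - pose proof (Rmin_r (eps / 2) (b / 2)). lra. }
  assert (H1 : Fb c (b - d) < 0) by (apply (Fb_neg_before_root c Hc b); auto; lra).
  assert (H2 : 0 < Fb c (b + d)) by (apply (Fb_pos_after_root c Hc b); auto; lra).
  pose proof (is_lim_seq_continuous _ cn c (Fb_continuous_param (b - d) c) Hlim) as L1.
  pose proof (is_lim_seq_continuous _ cn c (Fb_continuous_param (b + d) c) Hlim) as L2.
  apply (filter_imp (fun n => Fb (cn n) (b - d) < 0 /\ 0 < Fb (cn n) (b + d))).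
  2: { apply filter_and; [exact (is_lim_seq_eventually_lt _ _ 0 L1 H1)
                         | exact (is_lim_seq_eventually_gt _ _ 0 L2 H2)]. }
  intros n [E1 E2].
  destruct (IVT_gen (Fb (cn n)) (b - d) (b + d) 0 (Fb_continuous (cn n))) as [z [Hz Hz0]].
  { rewrite Rmin_left, Rmax_right by lra. lra. }
  rewrite Rmin_left, Rmax_right in Hz by lra.
  destruct (Hx n) as [Hx1 Hx2].
  assert (z = xn n) by (apply (Fb_root_unique (cn n) (Hcn n)); auto; lra).
  subst z. apply Rabs_lt_between'. lra.
Qed.

Lemma is_lim_eventually_gt (g : R -> R) x (l m : R) :
  is_lim g x l -> m < l -> Rbar_locally' x (fun y => m < g y).
Proof. intros H Hl. apply (H (fun y => m < y)). exact (open_gt m l Hl). Qed.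

Lemma is_lim_eq (g : R -> R) x (l1 l2 : R) : is_lim g x l1 -> is_lim g x l2 -> l1 = l2.
Proof.
  intros H1 H2. apply is_lim_unique in H1. apply is_lim_unique in H2.
  rewrite H1 in H2. now injection H2.
Qed.

(** * The profile of a football soliton *)

(* The solution of [P' = a P - t + b1], [P 0 = 0]. *)
Definition profile (a b1 t : R) :=
  (t - b1) / a + 1 / a ^ 2 + (b1 / a - 1 / a ^ 2) * exp (a * t).

Lemma profile_derive a b1 t :
  a <> 0 -> is_derive (profile a b1) t (a * profile a b1 t - t + b1).
Proof. intro h. unfold profile. auto_derive; auto. field. auto. Qed.

Lemma profile_0 a b1 : a <> 0 -> profile a b1 0 = 0.
Proof. intro h. unfold profile. rewrite Rmult_0_r, exp_0. field. auto. Qed.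

Lemma ratio_in b1 b2 : 0 < b1 < b2 -> 0 < b1 / b2 < 1.
Proof.
  intro h. split; [apply Rdiv_lt_0_compat; lra|].
  apply (Rmult_lt_reg_r b2); [lra|]. field_simplify; lra.
Qed.

Lemma Fb_scaled b1 b2 a : 0 < b1 < b2 ->
  a * b1 - 1 + (a * b2 + 1) * exp (- (a * (b1 + b2))) = Fb (b1 / b2) (a * b2).
Proof.
  intro h. unfold Fb. replace (b1 / b2 * (a * b2)) with (a * b1) by (field; lra).
  replace (- (a * b2 * (1 + b1 / b2))) with (- (a * (b1 + b2))) by (field; lra). ring.
Qed.

Lemma Fb_profile b1 b2 lam : 0 < b1 < b2 -> lam <> 0 ->
  Fb (b1 / b2) (lam * b2) = lam ^ 2 * exp (- (lam * (b1 + b2))) * profile lam b1 (b1 + b2).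
Proof.
  intros h hl. rewrite <- Fb_scaled by auto. unfold profile.
  rewrite <- (Rinv_inv (exp (lam * (b1 + b2)))), <- exp_Ropp.
  pose proof (exp_pos (- (lam * (b1 + b2)))). field. split; lra.
Qed.

Section FootballPotential.
Variables (b1 b2 : R) (f : R -> R).
Hypothesis Hb : 0 < b1 < b2.
Hypothesis Hf : is_football_potential b1 b2 f.

Let f1 := Derive_n f 1.
Let f2 := Derive_n f 2.
Let f3 := Derive_n f 3.

Lemma is_derive_f s : is_derive f s (f1 s).
Proof. destruct Hf as [H _]. exact (Derive_correct (Derive_n f 0) s (H 1%nat s)). Qed.

Lemma is_derive_f1 s : is_derive f1 s (f2 s).
Proof. destruct Hf as [H _]. exact (Derive_correct (Derive_n f 1) s (H 2%nat s)). Qed.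

Lemma is_derive_f2 s : is_derive f2 s (f3 s).
Proof. destruct Hf as [H _]. exact (Derive_correct (Derive_n f 2) s (H 3%nat s)). Qed.

Lemma f2_pos s : 0 < f2 s.
Proof. destruct Hf as [_ [H _]]. apply H. Qed.

Lemma f1_lim_m_infty : is_lim f1 m_infty 0.
Proof. destruct Hf as [_ [_ [H _]]]. exact H. Qed.

Lemma f1_lim_p_infty : is_lim f1 p_infty (b1 + b2).
Proof. destruct Hf as [_ [_ [_ [H _]]]]. exact H. Qed.

Lemma cone_angle_N : is_lim (fun s => f3 s / f2 s) m_infty b1.
Proof. destruct Hf as [_ [_ [_ [_ [_ [H _]]]]]]. exact H. Qed.

Lemma cone_angle_S : is_lim (fun s => f3 s / f2 s) p_infty (- b2).
Proof. destruct Hf as [_ [_ [_ [_ [_ [_ H]]]]]]. exact H. Qed.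

Lemma f1_lt u v : u < v -> f1 u < f1 v.
Proof.
  intro h. apply (lt_of_derive_pos f1 f2); auto.
  - intros; apply is_derive_f1.
  - intros; apply f2_pos.
Qed.

Lemma f1_inj u v : f1 u = f1 v -> u = v.
Proof.
  intro h. destruct (Rtotal_order u v) as [k|[k|k]]; auto.
  - pose proof (f1_lt u v k). lra.
  - pose proof (f1_lt v u k). lra.
Qed.

Lemma f1_surj t : 0 < t < b1 + b2 -> exists s, f1 s = t.
Proof.
  intro Ht.
  destruct (IVT_Rbar_incr f1 m_infty p_infty 0 (b1 + b2) t f1_lim_m_infty f1_lim_p_infty)
    as [s [_ [_ Hs]]]; simpl; auto; try lra.
  - intros x _ _. exact (is_derive_continuity_pt _ _ _ (is_derive_f1 x)).
  - now exists s.
Qed.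

(* Derivative of the soliton equation [- ln f'' = f - lam f' + al s + be]. *)
Lemma soliton_ode : exists lam al, forall s, f3 s = f2 s * (lam * f2 s - f1 s - al).
Proof.
  destruct Hf as [_ [_ [_ [_ [[lam [al [be Hs]]] _]]]]].
  exists lam, al. intro s. pose proof (f2_pos s).
  assert (DL : is_derive (fun t => - ln (f2 t)) s (- (f3 s / f2 s))).
  { apply (is_derive_opp (fun t => ln (f2 t))).
    apply (is_derive_comp ln f2); [|apply is_derive_f2].
    auto_derive; [lra|]. field. lra. }
  assert (DR : is_derive (fun t => - ln (f2 t)) s (f1 s - lam * f2 s + al)).
  { apply (is_derive_ext (fun t => f t - lam * f1 t + al * t + be)); [intro; now rewrite Hs|].
    pose proof (is_derive_f s) as D0. pose proof (is_derive_f1 s) as D1.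
    auto_derive; [split; [now exists (f1 s) | split; [now exists (f2 s) | easy]]|].
    rewrite (Derive_is_derive f _ _ D0), (Derive_is_derive f1 _ _ D1).
    ring. }
  pose proof (is_derive_unique _ _ _ DL) as E1. rewrite (is_derive_unique _ _ _ DR) in E1.
  assert (f3 s = - (f1 s - lam * f2 s + al) * f2 s) by (rewrite E1; field; lra).
  rewrite H0. ring.
Qed.

(* Near [N] the cone angle gives [(ln f'')' >= b1/2], so [f''] decays exponentially. *)
Lemma f2_lim_m_infty : is_lim f2 m_infty 0.
Proof.
  destruct (is_lim_eventually_gt _ _ _ (b1 / 2) cone_angle_N ltac:(lra)) as [M HM].
  assert (Hle : forall s, s < M -> f2 s <= f2 M * exp (b1 / 2 * s + - (b1 / 2 * M))).
  { intros s Hs.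
    assert (ln (f2 s) - b1 / 2 * s <= ln (f2 M) - b1 / 2 * M).
    { apply (le_of_derive_nonneg (fun t => ln (f2 t) - b1 / 2 * t) (fun t => f3 t / f2 t - b1 / 2));
        try lra.
      - intros x _. pose proof (f2_pos x). apply (is_derive_minus (fun t => ln (f2 t))).
        + apply (is_derive_comp ln f2); [|apply is_derive_f2]. auto_derive; [lra|]. field. lra.
        + auto_derive; auto. ring.
      - intros x Hx. specialize (HM x ltac:(lra)). lra. }
    rewrite <- (exp_ln (f2 s)), <- (exp_ln (f2 M)), <- exp_plus by apply f2_pos.
    destruct (Rle_lt_or_eq_dec (ln (f2 s)) (ln (f2 M) + (b1 / 2 * s + - (b1 / 2 * M))))
      as [h|h]; [lra| left; now apply exp_increasing | right; now rewrite h]. }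
  apply (is_lim_le_le_loc (fun _ => 0) (fun s => f2 M * exp (b1 / 2 * s + - (b1 / 2 * M)))).
  - exists M. intros s Hs. pose proof (f2_pos s). split; [lra|]. now apply Hle.
  - apply is_lim_const.
  - replace (Finite 0) with (Rbar_mult (f2 M) 0) by (simpl; f_equal; ring).
    apply is_lim_scal_l, (is_lim_comp_lin exp); [|lra].
    replace (Rbar_plus (Rbar_mult (b1 / 2) m_infty) (- (b1 / 2 * M))) with m_infty.
    + apply is_lim_exp_m.
    + simpl. case Rle_dec; intro h; [|lra]. case Rle_lt_or_eq_dec; intro h'; [easy | lra].
Qed.

Lemma soliton_ode_constant lam al :
  (forall s, f3 s = f2 s * (lam * f2 s - f1 s - al)) -> al = - b1.
Proof.
  intro Hode.
  assert (L : is_lim (fun s => lam * f2 s - f1 s - al) m_infty (lam * 0 - 0 - al)).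
  { apply is_lim_minus'; [|apply is_lim_const]. apply is_lim_minus'; [|apply f1_lim_m_infty].
    apply (is_lim_scal_l f2 lam m_infty 0 f2_lim_m_infty). }
  assert (L2 : is_lim (fun s => lam * f2 s - f1 s - al) m_infty b1).
  { apply (is_lim_ext (fun s => f3 s / f2 s)); [|apply cone_angle_N].
    intro s. rewrite Hode. field. pose proof (f2_pos s). lra. }
  pose proof (is_lim_eq _ _ _ _ L L2). lra.
Qed.

(* [(f'' - P(f')) e^{-lam f'}] has derivative zero and tends to [0] at [N]. *)
Lemma f2_eq_profile lam (P : R -> R) :
  (forall s, f3 s = f2 s * (lam * f2 s - f1 s + b1)) ->
  (forall t, is_derive P t (lam * P t - t + b1)) -> P 0 = 0 ->
  forall s, f2 s = P (f1 s).
Proof.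
  intros Hode HP HP0.
  set (W := fun t => (f2 t - P (f1 t)) * exp (- (lam * f1 t))).
  assert (W_const : forall s t, W s = W t).
  { apply eq_of_derive_zero. intro t.
    pose proof (is_derive_f1 t) as D1. pose proof (is_derive_f2 t) as D2.
    pose proof (HP (f1 t)) as DP.
    unfold W. auto_derive.
    - repeat split; [now exists (f3 t) | now exists (lam * P (f1 t) - f1 t + b1)
                    | now exists (f2 t) | now exists (f2 t)].
    - rewrite (Derive_is_derive f1 _ _ D1), (Derive_is_derive f2 _ _ D2),
        (Derive_is_derive P _ _ DP), Hode. ring. }
  assert (LW : is_lim W m_infty (Rbar_mult (0 - P 0) (exp (- (lam * 0))))).
  { apply (is_lim_mult (fun t => f2 t - P (f1 t)) (fun t => exp (- (lam * f1 t)))); [| |exact I].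
    - apply is_lim_minus'; [apply f2_lim_m_infty|].
      apply (is_lim_comp_continuous f1 P _ 0 f1_lim_m_infty).
      exact (is_derive_continuous _ _ _ (HP 0)).
    - apply (is_lim_comp_continuous f1 (fun x => exp (- (lam * x))) _ 0 f1_lim_m_infty).
      apply (is_derive_continuous _ _ (- lam * exp (- (lam * 0)))). auto_derive; auto. ring. }
  simpl in LW. rewrite HP0, Rminus_0_r, Rmult_0_l in LW.
  intro s.
  assert (HWs : W s = 0).
  { apply (is_lim_eq W m_infty); auto.
    apply (is_lim_ext (fun _ => W s)); [intro; apply W_const | apply is_lim_const]. }
  unfold W in HWs. pose proof (exp_pos (- (lam * f1 s))).
  apply Rmult_integral in HWs. destruct HWs; lra.
Qed.

Lemma soliton_lam_neq0 lam :
  (forall s, f3 s = f2 s * (lam * f2 s - f1 s + b1)) -> lam <> 0.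
Proof.
  intros Hode ->.
  set (P0 := fun t => b1 * t - t ^ 2 / 2).
  assert (HP : forall s, f2 s = P0 (f1 s)).
  { apply (f2_eq_profile 0 P0 Hode); unfold P0.
    - intro t. auto_derive; auto. field.
    - field. }
  assert (L : is_lim (fun s => P0 (f1 s)) p_infty (P0 (b1 + b2))).
  { apply (is_lim_comp_continuous f1 P0 _ _ f1_lim_p_infty).
    apply (is_derive_continuous _ _ (b1 - (b1 + b2))). unfold P0. auto_derive; auto. field. }
  assert (Hle : Rbar_le 0 (P0 (b1 + b2))).
  { apply (is_lim_le_loc (fun _ => 0) (fun s => P0 (f1 s)) p_infty); [|apply is_lim_const | exact L].
    exists 0. intros s _. rewrite <- HP. left. apply f2_pos. }
  simpl in Hle. unfold P0 in Hle. nra.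
Qed.

(* The cone angle at [S] forces [P (b1 + b2) = 0], which is the equation defining [a]. *)
Theorem f2_eq_profile_a a : is_a b1 b2 a -> forall s, f2 s = profile a b1 (f1 s).
Proof.
  intro Ha.
  destruct soliton_ode as [lam [al Hode]].
  rewrite (soliton_ode_constant lam al Hode) in Hode.
  assert (Hode' : forall s, f3 s = f2 s * (lam * f2 s - f1 s + b1)).
  { intro s. rewrite Hode. ring. }
  pose proof (soliton_lam_neq0 lam Hode') as Hlam.
  assert (HP : forall s, f2 s = profile lam b1 (f1 s)).
  { apply (f2_eq_profile lam); auto using profile_0. intro t. now apply profile_derive. }
  assert (HS : lam * profile lam b1 (b1 + b2) = 0).
  { enough (L : is_lim (fun s => f3 s / f2 s) p_infty
                  (lam * profile lam b1 (b1 + b2) - (b1 + b2) + b1)).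
    { pose proof (is_lim_eq _ _ _ _ L cone_angle_S). lra. }
    apply (is_lim_ext (fun s => lam * profile lam b1 (f1 s) - f1 s + b1)).
    { intro s. rewrite Hode', <- HP. field. pose proof (f2_pos s). lra. }
    apply (is_lim_comp_continuous f1 (fun x => lam * profile lam b1 x - x + b1) _ _ f1_lim_p_infty).
    apply (ex_derive_continuous (V := R_NormedModule)). unfold profile. auto_derive; auto. }
  destruct Ha as [Ha0 Ha]. rewrite Fb_scaled in Ha by auto.
  assert (Hroot : Fb (b1 / b2) (lam * b2) = 0).
  { rewrite Fb_profile by auto. apply Rmult_integral in HS.
    destruct HS as [H0 | H0]; [easy | rewrite H0; ring]. }
  assert (lam * b2 = a * b2).
  { apply (Fb_root_unique (b1 / b2) (ratio_in b1 b2 Hb)); auto;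
      apply Rmult_integral_contrapositive_currified; lra. }
  replace a with lam by (apply (Rmult_eq_reg_r b2); lra). exact HP.
Qed.
End FootballPotential.

(** * Uniform convergence *)

Lemma Rabs_exp_sub_le x y : Rabs (exp x - exp y) <= exp (Rmax x y) * Rabs (x - y).
Proof.
  assert (Hd : forall t, is_derive exp t (exp t)) by (intro; auto_derive; auto; ring).
  assert (Hle : forall u v, u < v -> Rabs (exp v - exp u) <= exp v * Rabs (v - u)).
  { intros u v Huv. destruct (mean_value exp exp u v Huv) as [c [Hc Hcuv]]; auto.
    rewrite Hc, Rabs_mult, (Rabs_pos_eq (exp c)) by (left; apply exp_pos).
    apply Rmult_le_compat_r; [apply Rabs_pos | left; apply exp_increasing; lra]. }
  destruct (Rtotal_order x y) as [h|[->|h]].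
  - rewrite Rmax_right, Rabs_minus_sym, (Rabs_minus_sym x) by lra. now apply Hle.
  - rewrite !Rminus_diag, Rabs_R0. lra.
  - rewrite Rmax_left by lra. now apply Hle.
Qed.

Lemma Rabs_mult_sub_le x y x0 y0 Mx My d :
  Rabs x0 <= Mx -> Rabs y0 <= My -> Rabs (x - x0) < d -> Rabs (y - y0) < d -> d <= 1 ->
  Rabs (x * y - x0 * y0) <= d * (1 + Mx + My).
Proof.
  intros h1 h2 h3 h4 h5.
  replace (x * y - x0 * y0) with ((x - x0) * (y - y0) + x0 * (y - y0) + y0 * (x - x0)) by ring.
  pose proof (Rabs_pos (x - x0)). pose proof (Rabs_pos (y - y0)).
  pose proof (Rabs_pos x0). pose proof (Rabs_pos y0).
  eapply Rle_trans; [apply Rabs_triang|]. eapply Rle_trans; [apply Rplus_le_compat_r, Rabs_triang|].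
  rewrite !Rabs_mult. nra.
Qed.

Section UniformConvergence.
Context {T : Type} (K : T -> Prop).

Definition bounded_on (u : T -> R) := exists M, forall p, K p -> Rabs (u p) <= M.

Definition unif_conv_on (un : nat -> T -> R) (u : T -> R) :=
  forall eps, 0 < eps -> eventually (fun n => forall p, K p -> Rabs (un n p - u p) < eps).

Lemma bounded_on_nonneg u : bounded_on u -> exists M, 0 <= M /\ forall p, K p -> Rabs (u p) <= M.
Proof.
  intros [M HM]. exists (Rabs M). split; [apply Rabs_pos|].
  intros p Hp. eapply Rle_trans; [now apply HM | apply Rle_abs].
Qed.

Lemma bounded_on_plus u v : bounded_on u -> bounded_on v -> bounded_on (fun p => u p + v p).
Proof.
  intros [Mu Hu] [Mv Hv]. exists (Mu + Mv). intros p Hp.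
  eapply Rle_trans; [apply Rabs_triang|]. specialize (Hu p Hp). specialize (Hv p Hp). lra.
Qed.

Lemma bounded_on_mult u v : bounded_on u -> bounded_on v -> bounded_on (fun p => u p * v p).
Proof.
  intros Bu Bv. destruct (bounded_on_nonneg u Bu) as [Mu [Mu0 Hu]].
  destruct (bounded_on_nonneg v Bv) as [Mv [Mv0 Hv]].
  exists (Mu * Mv). intros p Hp. rewrite Rabs_mult.
  apply Rmult_le_compat; auto using Rabs_pos.
Qed.

Lemma unif_conv_on_ext un vn u v :
  (forall n p, K p -> un n p = vn n p) -> (forall p, K p -> u p = v p) ->
  unif_conv_on un u -> unif_conv_on vn v.
Proof.
  intros Hunv Huv Hu eps Heps. destruct (Hu eps Heps) as [N HN]. exists N. intros n Hn p Hp.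
  rewrite <- Hunv, <- Huv by exact Hp. now apply HN.
Qed.

Lemma unif_conv_on_fixed u : unif_conv_on (fun _ => u) u.
Proof. intros eps Heps. exists 0%nat. intros n _ p _. rewrite Rminus_diag, Rabs_R0. lra. Qed.

Lemma unif_conv_on_const_seq (c : nat -> R) (l : R) :
  is_lim_seq c l -> unif_conv_on (fun n _ => c n) (fun _ => l).
Proof.
  intros Hl eps Heps. apply is_lim_seq_spec in Hl. destruct (Hl (mkposreal eps Heps)) as [N HN].
  exists N. intros n Hn _ _. exact (HN n Hn).
Qed.

Lemma unif_conv_on_plus un vn u v :
  unif_conv_on un u -> unif_conv_on vn v ->
  unif_conv_on (fun n p => un n p + vn n p) (fun p => u p + v p).
Proof.
  intros Hu Hv eps Heps.
  destruct (Hu (eps / 2) ltac:(lra)) as [N1 H1]. destruct (Hv (eps / 2) ltac:(lra)) as [N2 H2].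
  exists (max N1 N2). intros n Hn p Hp.
  specialize (H1 n ltac:(lia) p Hp). specialize (H2 n ltac:(lia) p Hp).
  replace (un n p + vn n p - (u p + v p)) with ((un n p - u p) + (vn n p - v p)) by ring.
  eapply Rle_lt_trans; [apply Rabs_triang | lra].
Qed.

Lemma unif_conv_on_minus un vn u v :
  unif_conv_on un u -> unif_conv_on vn v ->
  unif_conv_on (fun n p => un n p - vn n p) (fun p => u p - v p).
Proof.
  intros Hu Hv eps Heps.
  destruct (Hu (eps / 2) ltac:(lra)) as [N1 H1]. destruct (Hv (eps / 2) ltac:(lra)) as [N2 H2].
  exists (max N1 N2). intros n Hn p Hp.
  specialize (H1 n ltac:(lia) p Hp). specialize (H2 n ltac:(lia) p Hp).
  replace (un n p - vn n p - (u p - v p)) with ((un n p - u p) + - (vn n p - v p)) by ring.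
  eapply Rle_lt_trans; [apply Rabs_triang|]. rewrite Rabs_Ropp. lra.
Qed.

Lemma unif_conv_on_mult un vn u v : bounded_on u -> bounded_on v ->
  unif_conv_on un u -> unif_conv_on vn v ->
  unif_conv_on (fun n p => un n p * vn n p) (fun p => u p * v p).
Proof.
  intros Bu Bv Hu Hv eps Heps.
  destruct (bounded_on_nonneg u Bu) as [Mu [Mu0 HMu]].
  destruct (bounded_on_nonneg v Bv) as [Mv [Mv0 HMv]].
  set (d := Rmin 1 (eps / (2 * (1 + Mu + Mv)))).
  assert (Hd : 0 < d /\ d <= 1 /\ d * (1 + Mu + Mv) < eps).
  { unfold d. split; [apply Rmin_glb_lt; [lra | apply Rdiv_lt_0_compat; lra]|].
    split; [apply Rmin_l|].
    eapply Rle_lt_trans; [apply Rmult_le_compat_r; [lra | apply Rmin_r]|].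
    replace (eps / (2 * (1 + Mu + Mv)) * (1 + Mu + Mv)) with (eps / 2) by (field; lra). lra. }
  destruct (Hu d (proj1 Hd)) as [N1 H1]. destruct (Hv d (proj1 Hd)) as [N2 H2].
  exists (max N1 N2). intros n Hn p Hp.
  specialize (H1 n ltac:(lia) p Hp). specialize (H2 n ltac:(lia) p Hp).
  eapply Rle_lt_trans; [|apply Hd].
  apply Rabs_mult_sub_le; auto; lra.
Qed.

Lemma unif_conv_on_exp un u : bounded_on u -> unif_conv_on un u ->
  unif_conv_on (fun n p => exp (un n p)) (fun p => exp (u p)).
Proof.
  intros Bu Hu eps Heps.
  destruct (bounded_on_nonneg u Bu) as [M [M0 HM]].
  set (C := exp (M + 1)). assert (HC : 0 < C) by apply exp_pos.
  set (d := Rmin 1 (eps / C)).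
  assert (Hd : 0 < d) by (apply Rmin_glb_lt; [lra | now apply Rdiv_lt_0_compat]).
  destruct (Hu d Hd) as [N HN]. exists N. intros n Hn p Hp.
  specialize (HN n Hn p Hp). pose proof (HM p Hp) as Hup.
  pose proof (Rmin_l 1 (eps / C)) as Hd1. pose proof (Rmin_r 1 (eps / C)) as Hd2. fold d in Hd1, Hd2.
  assert (HmaxC : exp (Rmax (un n p) (u p)) <= C).
  { apply Rabs_lt_between in HN. apply Rabs_le_between in Hup. unfold C.
    destruct (Rle_lt_or_eq_dec (Rmax (un n p) (u p)) (M + 1)) as [h|h].
    - apply Rmax_lub; lra.
    - left. now apply exp_increasing.
    - right. now rewrite h. }
  eapply Rle_lt_trans; [apply Rabs_exp_sub_le|].
  apply (Rle_lt_trans _ (C * Rabs (un n p - u p))); [apply Rmult_le_compat_r; auto using Rabs_pos|].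
  apply (Rlt_le_trans _ (C * d)); [now apply Rmult_lt_compat_l|].
  apply (Rle_trans _ (C * (eps / C))); [apply Rmult_le_compat_l; lra | right; field; lra].
Qed.

Lemma unif_conv_on_eventually_gt un u m : 0 < m -> (forall p, K p -> m <= u p) ->
  unif_conv_on un u -> eventually (fun n => forall p, K p -> m / 2 < un n p).
Proof.
  intros Hm Hum Hu. destruct (Hu (m / 2) ltac:(lra)) as [N HN]. exists N. intros n Hn p Hp.
  specialize (HN n Hn p Hp). specialize (Hum p Hp). apply Rabs_lt_between in HN. lra.
Qed.

Lemma unif_conv_on_inv un u m : 0 < m -> (forall p, K p -> m <= u p) ->
  unif_conv_on un u -> unif_conv_on (fun n p => / un n p) (fun p => / u p).
Proof.
  intros Hm Hum Hu eps Heps.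
  set (d := Rmin (m / 2) (eps * (m * m) / 2)).
  assert (Hmm : 0 < m * m) by nra.
  assert (Hd : 0 < d) by (apply Rmin_glb_lt; [lra|]; apply Rdiv_lt_0_compat; [nra | lra]).
  destruct (Hu d Hd) as [N1 H1]. destruct (unif_conv_on_eventually_gt un u m Hm Hum Hu) as [N2 H2].
  exists (max N1 N2). intros n Hn p Hp.
  specialize (H1 n ltac:(lia) p Hp) as Hd'. specialize (H2 n ltac:(lia) p Hp) as Hgt.
  specialize (Hum p Hp).
  pose proof (Rmin_r (m / 2) (eps * (m * m) / 2)) as Hd2. fold d in Hd2.
  replace (/ un n p - / u p) with ((u p - un n p) / (un n p * u p)) by (field; lra).
  unfold Rdiv. rewrite Rabs_mult, Rabs_minus_sym, (Rabs_pos_eq (/ _))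
    by (left; apply Rinv_0_lt_compat; nra).
  apply (Rle_lt_trans _ (Rabs (un n p - u p) * (2 / (m * m)))).
  - apply Rmult_le_compat_l; [apply Rabs_pos|].
    replace (2 / (m * m)) with (/ (m / 2 * m)) by (field; lra).
    apply Rinv_le_contravar; [nra|]. apply Rmult_le_compat; lra.
  - apply (Rlt_le_trans _ (d * (2 / (m * m)))).
    + apply Rmult_lt_compat_r; [apply Rdiv_lt_0_compat; nra | exact Hd'].
    + apply (Rle_trans _ (eps * (m * m) / 2 * (2 / (m * m)))).
      * apply Rmult_le_compat_r; [left; apply Rdiv_lt_0_compat; nra | exact Hd2].
      * right. field. lra.
Qed.
End UniformConvergence.

(** * Expressions closed under partial derivatives *)

(* Expressions in [x], [y], [1/|z|^2], [ln |z|^2], [|z|^(-2 B eps)] and [1/Q]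
   with parameters [eps], [E], [kappa]: the components of the rescaled
   football metric are of this form, and the class is closed under partial
   derivatives. *)
Inductive expr : Type :=
| ECst (c : R) | EEps | ECoef | EKappa | EX | EY
| ENormInv | ENormLog | ENormPow | EQInv
| EAdd (e1 e2 : expr) | EMul (e1 e2 : expr).

Definition Qfun (B eps E : R) (p : pt) :=
  1 - B * eps * ln (nrm2 p) - E * exp (- (B * eps * ln (nrm2 p))).

Fixpoint eval (B eps E kappa : R) (e : expr) (p : pt) : R :=
  match e with
  | ECst c => c
  | EEps => eps
  | ECoef => E
  | EKappa => kappa
  | EX => fst p
  | EY => snd p
  | ENormInv => / nrm2 p
  | ENormLog => ln (nrm2 p)
  | ENormPow => exp (- (B * eps * ln (nrm2 p)))
  | EQInv => / Qfun B eps E p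
  | EAdd e1 e2 => eval B eps E kappa e1 p + eval B eps E kappa e2 p
  | EMul e1 e2 => eval B eps E kappa e1 p * eval B eps E kappa e2 p
  end.

Section ExprDerivative.
Variables (B : R) (d : bool).

Let Ed := if d then EX else EY.
Let dlog := EMul (ECst 2) (EMul Ed ENormInv).
Let dpow := EMul (EMul (ECst (- B)) (EMul EEps dlog)) ENormPow.
Let dQ := EAdd (EMul (ECst (- B)) (EMul EEps dlog)) (EMul (ECst (-1)) (EMul ECoef dpow)).

Fixpoint expr_derive (e : expr) : expr :=
  match e with
  | ECst _ | EEps | ECoef | EKappa => ECst 0
  | EX => ECst (if d then 1 else 0)
  | EY => ECst (if d then 0 else 1)
  | ENormInv => EMul (ECst (-2)) (EMul Ed (EMul ENormInv ENormInv))
  | ENormLog => dlog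
  | ENormPow => dpow
  | EQInv => EMul (EMul (ECst (-1)) (EMul EQInv EQInv)) dQ
  | EAdd e1 e2 => EAdd (expr_derive e1) (expr_derive e2)
  | EMul e1 e2 => EAdd (EMul (expr_derive e1) e2) (EMul e1 (expr_derive e2))
  end.
End ExprDerivative.

Definition expr_derives (B : R) (l : list bool) (e : expr) : expr :=
  fold_right (expr_derive B) e l.

Definition upd (d : bool) (p : pt) (t : R) : pt := if d then (t, snd p) else (fst p, t).

Lemma is_derive_eval B eps E kappa e d p :
  0 < nrm2 p -> Qfun B eps E p <> 0 ->
  is_derive (fun t => eval B eps E kappa e (upd d p t)) (if d then fst p else snd p)
    (eval B eps E kappa (expr_derive B d e) p).
Proof.
  destruct p as [p1 p2]. intros Hn HQ. unfold nrm2, Qfun in *. simpl in Hn, HQ.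
  induction e; simpl.
  1-4: exact (is_derive_const _ _).
  1-2: destruct d; simpl.
  1,4: exact (is_derive_id _).
  1-2: exact (is_derive_const _ _).
  1-3: destruct d; simpl; unfold nrm2; simpl; auto_derive; try lra; field; lra.
  - destruct d; simpl; unfold Qfun, nrm2 in *; simpl in *;
      auto_derive; repeat split; try lra; field; lra.
  - now apply (is_derive_plus (fun t => eval B eps E kappa e1 _) (fun t => eval B eps E kappa e2 _)).
  - destruct d;
      apply (is_derive_mult (fun t => eval B eps E kappa e1 _) (fun t => eval B eps E kappa e2 _));
      auto; intros; apply Rmult_comm.
Qed.

Lemma pd_eval B eps E kappa e d p : 0 < nrm2 p -> Qfun B eps E p <> 0 ->
  pd d (eval B eps E kappa e) p = eval B eps E kappa (expr_derive B d e) p.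
Proof.
  intros Hn HQ. pose proof (is_derive_unique _ _ _ (is_derive_eval B eps E kappa e d p Hn HQ)).
  destruct d, p; assumption.
Qed.

(* Partial derivatives at a point only see a set that contains a
   neighbourhood of the point on both coordinate lines. *)
Definition line_open (U : pt -> Prop) :=
  forall (p : pt) (d : bool), U p -> locally (if d then fst p else snd p) (fun t => U (upd d p t)).

Lemma pd_ext (U : pt -> Prop) (F G : pt -> R) d : line_open U ->
  (forall q, U q -> F q = G q) -> forall q, U q -> pd d F q = pd d G q.
Proof.
  intros HU HFG [q1 q2] Hq. specialize (HU (q1, q2) d Hq).
  destruct d; unfold pd; simpl; apply Derive_ext_loc; simpl in HU;
    apply (filter_imp _ _ (fun t Ht => HFG _ Ht) HU).
Qed.

Lemma pds_ext (U : pt -> Prop) (F G : pt -> R) l : line_open U ->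
  (forall q, U q -> F q = G q) -> forall q, U q -> pds l F q = pds l G q.
Proof.
  intros HU HFG. induction l as [|d l IH]; intros q Hq; simpl; auto.
  now apply (pd_ext U).
Qed.

Lemma pds_eval B eps E kappa e (U : pt -> Prop) : line_open U ->
  (forall q, U q -> 0 < nrm2 q /\ Qfun B eps E q <> 0) ->
  forall l q, U q -> pds l (eval B eps E kappa e) q = eval B eps E kappa (expr_derives B l e) q.
Proof.
  intros HU HQ l. induction l as [|d l IH]; intros q Hq; simpl; auto.
  rewrite (pd_ext U _ _ d HU IH q Hq). apply pd_eval; apply HQ; auto.
Qed.

Lemma annulus_line_open r1 r2 : line_open (fun q => r1 < nrm2 q < r2).
Proof.
  intros [p1 p2] d Hp.
  assert (Hc : continuous (fun t => nrm2 (upd d (p1, p2) t)) (if d then p1 else p2)).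
  { apply (ex_derive_continuous (V := R_NormedModule)).
    unfold nrm2. destruct d; simpl; auto_derive; auto. }
  apply (Hc (fun y => r1 < y < r2)), (open_and _ _ (open_gt r1) (open_lt r2)).
  destruct d; exact Hp.
Qed.

Lemma Qfun_eps0 B E p : Qfun B 0 E p = 1 - E.
Proof. unfold Qfun. rewrite Rmult_0_r, Rmult_0_l, Ropp_0, exp_0. ring. Qed.

Section ExprConvergence.
Variables (B r1 r2 E0 kappa0 : R) (epsn En kappan : nat -> R).
Hypothesis Hr1 : 0 < r1.
Hypothesis Heps : is_lim_seq epsn 0.
Hypothesis HE : is_lim_seq En E0.
Hypothesis Hkappa : is_lim_seq kappan kappa0.
Hypothesis HE0 : E0 < 1.

Let K p := r1 <= nrm2 p <= r2.

Lemma bounded_on_coord (d : bool) : bounded_on K (fun p => if d then fst p else snd p).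
Proof.
  exists (1 + r2). intros [x y] [_ Hp]. unfold nrm2 in Hp. simpl in *.
  apply Rabs_le_between. destruct d; split; nra.
Qed.

Lemma bounded_on_norm_inv : bounded_on K (fun p => / nrm2 p).
Proof.
  exists (/ r1). intros p [Hp _]. rewrite Rabs_pos_eq by (left; apply Rinv_0_lt_compat; lra).
  apply Rinv_le_contravar; lra.
Qed.

Lemma bounded_on_norm_log : bounded_on K (fun p => ln (nrm2 p)).
Proof.
  exists (Rabs (ln r1) + Rabs (ln r2)). intros p [Hp1 Hp2].
  pose proof (ln_le r1 (nrm2 p) Hr1 Hp1). pose proof (ln_le (nrm2 p) r2 ltac:(lra) Hp2).
  pose proof (Rle_abs (ln r2)). pose proof (Rle_abs (- ln r1)). rewrite Rabs_Ropp in *.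
  pose proof (Rabs_pos (ln r1)). pose proof (Rabs_pos (ln r2)). apply Rabs_le_between. lra.
Qed.

Lemma unif_conv_exponent :
  unif_conv_on K (fun n p => - (B * epsn n * ln (nrm2 p))) (fun _ => 0).
Proof.
  apply (unif_conv_on_ext K (fun n p => (- B * epsn n) * ln (nrm2 p)) _ (fun p => 0 * ln (nrm2 p)));
    [intros; ring | intros; ring |].
  apply unif_conv_on_mult; [exists 0; intros; rewrite Rabs_R0; lra | apply bounded_on_norm_log | |].
  - replace 0 with (- B * 0) by ring. apply unif_conv_on_const_seq.
    apply (is_lim_seq_scal_l _ (- B) 0 Heps).
  - apply unif_conv_on_fixed.
Qed.

Lemma unif_conv_norm_pow :
  unif_conv_on K (fun n p => exp (- (B * epsn n * ln (nrm2 p)))) (fun _ => 1).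
Proof.
  rewrite <- exp_0. apply (unif_conv_on_exp K _ (fun _ => 0)); [|apply unif_conv_exponent].
  exists 0. intros. rewrite Rabs_R0. lra.
Qed.

Lemma unif_conv_Qfun : unif_conv_on K (fun n => Qfun B (epsn n) (En n)) (fun _ => 1 - E0).
Proof.
  apply (unif_conv_on_ext K
    (fun n p => 1 + - (B * epsn n * ln (nrm2 p)) - En n * exp (- (B * epsn n * ln (nrm2 p))))
    _ (fun _ => 1 + 0 - E0 * 1)); [intros; unfold Qfun; ring | intros; ring |].
  apply unif_conv_on_minus; [apply unif_conv_on_plus|apply unif_conv_on_mult].
  - apply unif_conv_on_fixed.
  - apply unif_conv_exponent.
  - exists (Rabs E0). intros. lra.
  - exists 1. intros. rewrite Rabs_R1. lra.
  - now apply unif_conv_on_const_seq.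
  - apply unif_conv_norm_pow.
Qed.

Lemma Qfun_eventually_gt :
  eventually (fun n => forall p, K p -> (1 - E0) / 2 < Qfun B (epsn n) (En n) p).
Proof.
  apply (unif_conv_on_eventually_gt K _ (fun _ => 1 - E0)); [lra | intros; lra | apply unif_conv_Qfun].
Qed.

Lemma expr_unif_conv e :
  bounded_on K (eval B 0 E0 kappa0 e) /\
  unif_conv_on K (fun n => eval B (epsn n) (En n) (kappan n) e) (eval B 0 E0 kappa0 e).
Proof.
  assert (Hconst : forall (c : nat -> R) (l : R), is_lim_seq c l ->
            bounded_on K (fun _ => l) /\ unif_conv_on K (fun n _ => c n) (fun _ => l)).
  { intros c l Hl. split; [exists (Rabs l); intros; apply Rle_refl|].
    now apply unif_conv_on_const_seq. }
  assert (Hfixed : forall u, bounded_on K u -> bounded_on K u /\ unif_conv_on K (fun _ => u) u).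
  { intros u Hu. split; [exact Hu | apply unif_conv_on_fixed]. }
  induction e as [c| | | | | | | | | |e1 [B1 C1] e2 [B2 C2]|e1 [B1 C1] e2 [B2 C2]]; simpl.
  - apply Hconst, is_lim_seq_const.
  - now apply Hconst.
  - now apply Hconst.
  - now apply Hconst.
  - exact (Hfixed _ (bounded_on_coord true)).
  - exact (Hfixed _ (bounded_on_coord false)).
  - exact (Hfixed _ bounded_on_norm_inv).
  - exact (Hfixed _ bounded_on_norm_log).
  - split.
    + exists 1. intros p _. rewrite Rmult_0_r, Rmult_0_l, Ropp_0, exp_0, Rabs_R1. lra.
    + apply (unif_conv_on_ext K (fun n p => exp (- (B * epsn n * ln (nrm2 p)))) _ (fun _ => 1));
        [easy | | apply unif_conv_norm_pow].
      intros p _. now rewrite Rmult_0_r, Rmult_0_l, Ropp_0, exp_0.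
  - split.
    + exists (/ (1 - E0)). intros p _. rewrite Qfun_eps0, Rabs_pos_eq; [lra|].
      left. apply Rinv_0_lt_compat. lra.
    + apply (unif_conv_on_ext K (fun n p => / Qfun B (epsn n) (En n) p) _ (fun _ => / (1 - E0)));
        [easy | intros; now rewrite Qfun_eps0 |].
      apply (unif_conv_on_inv K _ (fun _ => 1 - E0) (1 - E0));
        [lra | intros; lra | apply unif_conv_Qfun].
  - split; [now apply bounded_on_plus | now apply unif_conv_on_plus].
  - split; [now apply bounded_on_mult | now apply unif_conv_on_mult].
Qed.
End ExprConvergence.

Lemma pds_comp_eval B eps E kappa (e : expr) (F : pt -> R) (U : pt -> Prop) :
  line_open U -> (forall q, U q -> 0 < nrm2 q /\ Qfun B eps E q <> 0) ->
  (forall q, U q -> F q = eval B eps E kappa e q) ->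
  forall l q, U q -> pds l F q = eval B eps E kappa (expr_derives B l e) q.
Proof.
  intros HU HQ HF l q Hq. rewrite (pds_ext U F _ l HU HF q Hq).
  now apply (pds_eval B eps E kappa e U).
Qed.

Lemma nrm2_bounds r1 r2 x : 0 < r1 -> r1 <= sqrt (nrm2 x) <= r2 -> r1 ^ 2 <= nrm2 x <= r2 ^ 2.
Proof.
  intros h [h1 h2]. assert (0 <= nrm2 x) by (unfold nrm2; nra).
  rewrite <- (sqrt_sqrt (nrm2 x)) by auto. split; simpl; nra.
Qed.

(* On the open annulus [r1^2/2 < |x|^2 < 2 r2^2] the components are given by
   the expressions, hence so are all their partial derivatives. *)
Lemma Cinf_loc_conv_of_expr (B E0 kappa0 : R) (epsn En kappan : nat -> R)
  (e : bool -> bool -> expr) (Tn : nat -> tensor2) (T : tensor2) :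
  is_lim_seq epsn 0 -> is_lim_seq En E0 -> is_lim_seq kappan kappa0 -> E0 < 1 ->
  (forall rho1 rho2, 0 < rho1 -> eventually (fun n => forall q i j, rho1 < nrm2 q < rho2 ->
      Defs.comp (Tn n) i j q = eval B (epsn n) (En n) (kappan n) (e i j) q)) ->
  (forall q i j, 0 < nrm2 q -> Defs.comp T i j q = eval B 0 E0 kappa0 (e i j) q) ->
  Cinf_loc_conv Tn T.
Proof.
  intros Heps HE Hkappa HE0 HTn HT r1 r2 Hr1 Hr12 l i j eps Heps'.
  set (rho1 := r1 ^ 2 / 2). set (rho2 := 2 * r2 ^ 2).
  assert (Hrho1 : 0 < rho1) by (unfold rho1; nra).
  set (U := fun q => rho1 < nrm2 q < rho2).
  destruct (HTn rho1 rho2 Hrho1) as [N1 H1].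
  destruct (Qfun_eventually_gt B rho1 rho2 E0 epsn En Hrho1 Heps HE HE0) as [N2 H2].
  destruct (proj2 (expr_unif_conv B rho1 rho2 E0 kappa0 epsn En kappan Hrho1 Heps HE Hkappa HE0
                     (expr_derives B l (e i j))) eps Heps') as [N3 H3].
  exists (max N1 (max N2 N3)). intros n Hn x Hx.
  pose proof (nrm2_bounds r1 r2 x Hr1 Hx) as Hx'.
  assert (Ux : U x) by (unfold U, rho1, rho2; nra).
  assert (QU : forall q, U q -> 0 < nrm2 q /\ Qfun B (epsn n) (En n) q <> 0).
  { intros q Hq. unfold U in Hq. split; [lra|].
    specialize (H2 n ltac:(lia) q ltac:(lra)). lra. }
  assert (QU0 : forall q, U q -> 0 < nrm2 q /\ Qfun B 0 E0 q <> 0).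
  { intros q Hq. unfold U in Hq. rewrite Qfun_eps0. split; lra. }
  rewrite (pds_comp_eval B (epsn n) (En n) (kappan n) (e i j) _ U (annulus_line_open _ _) QU),
    (pds_comp_eval B 0 E0 kappa0 (e i j) _ U (annulus_line_open _ _) QU0); auto.
  - apply H3; [lia | unfold U in Ux; lra].
  - intros q Hq. apply HT. unfold U in Hq. lra.
  - intros q Hq. now apply (H1 n ltac:(lia)).
Qed.

(** * The pushforward of the football metric *)

Definition radial_map (G : R -> R) (p : pt) : pt := (G (nrm2 p) * fst p, G (nrm2 p) * snd p).

Lemma Derive_mult_comp (G u w : R -> R) t dG du dw :
  is_derive G (u t) dG -> is_derive u t du -> is_derive w t dw ->
  Derive (fun s => G (u s) * w s) t = dG * du * w t + G (u t) * dw.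
Proof.
  intros HG Hu Hw. apply is_derive_unique.
  apply (is_derive_mult (fun s => G (u s)) w); [| exact Hw | intros; apply Rmult_comm].
  rewrite Rmult_comm. now apply (is_derive_comp G u).
Qed.

Lemma jac_radial_map (G : R -> R) z1 z2 dG v : is_derive G (nrm2 (z1, z2)) dG ->
  jac (radial_map G) (z1, z2) v =
    (G (nrm2 (z1, z2)) * fst v + 2 * dG * (z1 * fst v + z2 * snd v) * z1,
     G (nrm2 (z1, z2)) * snd v + 2 * dG * (z1 * fst v + z2 * snd v) * z2).
Proof.
  intro HG. unfold jac, pd, radial_map. simpl.
  assert (D1 : is_derive (fun t => nrm2 (t, z2)) z1 (2 * z1))
    by (unfold nrm2; simpl; auto_derive; auto; ring).
  assert (D2 : is_derive (fun t => nrm2 (z1, t)) z2 (2 * z2))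
    by (unfold nrm2; simpl; auto_derive; auto; ring).
  assert (Did : forall x, is_derive (fun t : R => t) x 1) by (intro; exact (is_derive_id _)).
  assert (Dc : forall c x, is_derive (fun _ : R => c) x 0) by (intros; exact (is_derive_const _ _)).
  rewrite (Derive_mult_comp G (fun t => nrm2 (t, z2)) (fun t => t) z1 dG (2 * z1) 1 HG D1 (Did z1)),
    (Derive_mult_comp G (fun t => nrm2 (z1, t)) (fun _ => z1) z2 dG (2 * z2) 0 HG D2 (Dc z1 z2)),
    (Derive_mult_comp G (fun t => nrm2 (t, z2)) (fun _ => z2) z1 dG (2 * z1) 0 HG D1 (Dc z2 z1)),
    (Derive_mult_comp G (fun t => nrm2 (z1, t)) (fun t => t) z2 dG (2 * z2) 1 HG D2 (Did z2)).
  f_equal; ring.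
Qed.

(* The Jacobian [v |-> G v + 2 dG (z.v) z] is inverted by Sherman-Morrison. *)
Definition radial_jac_inv (G dG : R) (z e : pt) : pt :=
  let c := 2 * dG / (G + 2 * dG * nrm2 z) in
  let ze := fst z * fst e + snd z * snd e in
  (/ G * (fst e - c * ze * fst z), / G * (snd e - c * ze * snd z)).

Lemma radial_jac_invK G dG (z e : pt) : G <> 0 -> G + 2 * dG * nrm2 z <> 0 ->
  let v := radial_jac_inv G dG z e in
  (G * fst v + 2 * dG * (fst z * fst v + snd z * snd v) * fst z,
   G * snd v + 2 * dG * (fst z * fst v + snd z * snd v) * snd z) = e.
Proof.
  intros HG HD. destruct z as [z1 z2], e as [e1 e2]. unfold radial_jac_inv, nrm2 in *. simpl in *.
  replace (z1 * (z1 * 1) + z2 * (z2 * 1)) with (z1 * z1 + z2 * z2) in HD by ring.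
  f_equal; field; auto.
Qed.

Definition coord (i : bool) (p : pt) : R := if i then fst p else snd p.
Definition perp (p : pt) : pt := (- snd p, fst p).

Definition Q_expr (B : R) : expr :=
  EAdd (ECst 1)
    (EAdd (EMul (ECst (- B)) (EMul EEps ENormLog)) (EMul (ECst (-1)) (EMul ECoef ENormPow))).

Definition radial_part (i j : bool) : expr :=
  match i, j with
  | true, true => EMul EX EX
  | false, false => EMul EY EY
  | _, _ => EMul EX EY
  end.

Definition angular_part (i j : bool) : expr :=
  match i, j with
  | true, true => EMul EY EY
  | false, false => EMul EX EX
  | _, _ => EMul (ECst (-1)) (EMul EX EY)
  end.

(* With [Q = a^2 f''] the rescaled football metric is
   [kappa |y|^-4 (2 B^2 Q^-1 (y.dy)^2 + 2 Q (y^perp.dy)^2)]. *)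
Definition metric_expr (B : R) (i j : bool) : expr :=
  EMul EKappa (EMul (EMul ENormInv ENormInv)
    (EAdd (EMul (ECst (2 * B ^ 2)) (EMul EQInv (radial_part i j)))
          (EMul (ECst 2) (EMul (Q_expr B) (angular_part i j))))).

Lemma eval_metric_expr B eps E kappa i j p :
  eval B eps E kappa (metric_expr B i j) p =
  kappa * (/ nrm2 p * / nrm2 p) *
    (2 * B ^ 2 * / Qfun B eps E p * (coord i p * coord j p)
     + 2 * Qfun B eps E p * (coord i (perp p) * coord j (perp p))).
Proof.
  assert (HQ : eval B eps E kappa (Q_expr B) p = Qfun B eps E p) by (unfold Qfun; simpl; ring).
  unfold metric_expr. cbn [eval]. rewrite HQ. destruct i, j; simpl; ring.
Qed.

Lemma comp_g_cyl_eval B E0 kappa0 q i j : 0 < nrm2 q -> 1 - E0 = B -> 0 < B ->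
  Defs.comp (fun z v w => 2 * B * kappa0 * g_cyl z v w) i j q =
  eval B 0 E0 kappa0 (metric_expr B i j) q.
Proof.
  intros Hq HE HB. rewrite eval_metric_expr, Qfun_eps0, HE.
  destruct q as [q1 q2]. unfold Defs.comp, g_cyl, dot, nrm2 in *. simpl in *.
  destruct i, j; simpl; field; lra.
Qed.

Lemma Qfun_profile a b1 B p : a <> 0 ->
  Qfun B (/ a) ((1 - a * b1) * exp (a * b1)) p = a ^ 2 * profile a b1 (b1 - B * ln (nrm2 p) / a ^ 2).
Proof.
  intro Ha. unfold profile, Qfun.
  replace (a * (b1 - B * ln (nrm2 p) / a ^ 2)) with (a * b1 + - (B * / a * ln (nrm2 p)))
    by (field; auto).
  rewrite exp_plus. field. auto.
Qed.

(* [g(z)(v, w)] for [g = 2 phi |z|^-2 (dx^2 + dy^2)], [z = lam y] and [v, w]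
   the preimages of the standard basis under the Jacobian of [Psi]. *)
Lemma pullback_metric_formula a b1 B phi lam y1 y2 (i j : bool) :
  a <> 0 -> b1 <> 0 -> B <> 0 -> phi <> 0 -> lam <> 0 -> nrm2 (y1, y2) <> 0 ->
  let z := (lam * y1, lam * y2) in
  let G := / lam in
  let dG := G * (- (a ^ 2 / (2 * B)) * phi / nrm2 z - 1 / (2 * nrm2 z)) in
  / b1 ^ 2 * (2 * phi / nrm2 z *
    dot (radial_jac_inv G dG z (ebas i)) (radial_jac_inv G dG z (ebas j))) =
  / (a * b1) ^ 2 * (/ nrm2 (y1, y2) * / nrm2 (y1, y2)) *
    (2 * B ^ 2 * / (a ^ 2 * phi) * (coord i (y1, y2) * coord j (y1, y2))
     + 2 * (a ^ 2 * phi) * (coord i (perp (y1, y2)) * coord j (perp (y1, y2)))).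
Proof.
  intros Ha Hb HB Hp Hl Hy z G dG.
  assert (Hq : nrm2 z = lam ^ 2 * nrm2 (y1, y2)) by (unfold z, nrm2; simpl; ring).
  assert (HD : G + 2 * dG * nrm2 z = - (a ^ 2 / B) * phi * G) by (unfold dG; rewrite Hq; field; auto).
  assert (Hc : 2 * dG / (G + 2 * dG * nrm2 z)
               = (2 * (a ^ 2 / (2 * B)) * phi + 1) / (2 * (a ^ 2 / (2 * B)) * phi * nrm2 z)).
  { rewrite HD. unfold dG, G. rewrite Hq. field. repeat split; auto. }
  unfold radial_jac_inv. rewrite Hc. unfold G. rewrite Hq. unfold z, nrm2 in *. simpl in *.
  assert (Hy2 : y1 * y1 + y2 * y2 <> 0) by (intro h; apply Hy; rewrite <- h; ring).
  unfold dot. destruct i, j; simpl; field; repeat split; auto.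
Qed.

Definition radial_factor (a B b1 : R) (g : R -> R) (q : R) :=
  exp (a ^ 2 * (b1 - g (ln q)) / (2 * B)) / sqrt q.

Lemma Psi_radial a B b1 f p :
  Psi a B b1 f p = radial_map (radial_factor a B b1 (Derive_n f 1)) p.
Proof. unfold Psi, radial_map, radial_factor, tau. simpl. f_equal; unfold Rdiv; ring. Qed.

Lemma radial_factor_derive a B b1 g dg q : 0 < q -> B <> 0 -> is_derive g (ln q) dg ->
  is_derive (radial_factor a B b1 g) q
    (radial_factor a B b1 g q * (- (a ^ 2 / (2 * B)) * dg / q - 1 / (2 * q))).
Proof.
  intros Hq HB H. pose proof (sqrt_lt_R0 q Hq). pose proof (sqrt_sqrt q ltac:(lra)).
  unfold radial_factor. auto_derive; [repeat split; [now exists dg | lra | lra | lra]|].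
  rewrite (Derive_is_derive g _ _ H).
  replace (a * (a * 1) * (b1 + - g (ln q)) * / (2 * B)) with (a ^ 2 * (b1 - g (ln q)) / (2 * B))
    by (field; auto).
  set (r := sqrt q) in *. rewrite <- H1. field. repeat split; lra.
Qed.

Lemma sqrt_exp x : sqrt (exp x) = exp (x / 2).
Proof.
  rewrite <- (sqrt_square (exp (x / 2))) by (left; apply exp_pos).
  f_equal. rewrite <- exp_plus. f_equal. field.
Qed.

(* The circle [|y|^2 = exp(-a^2 (tau - b1)/B)] is the image under [Psi] of
   the level set [tau = f'(s)], i.e. of the circle [|z|^2 = e^s]. *)
Lemma radial_factor_rescale a B b1 (g : R -> R) y s :
  a <> 0 -> B <> 0 -> 0 < nrm2 y -> g s = b1 - B * ln (nrm2 y) / a ^ 2 ->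
  radial_factor a B b1 g (exp s) = sqrt (nrm2 y) / exp (s / 2).
Proof.
  intros Ha HB Hy Hs. unfold radial_factor. rewrite ln_exp, Hs, sqrt_exp.
  replace (a ^ 2 * (b1 - (b1 - B * ln (nrm2 y) / a ^ 2)) / (2 * B)) with (ln (nrm2 y) / 2)
    by (field; auto).
  now rewrite <- sqrt_exp, exp_ln.
Qed.

Lemma jac_radial_map_inv (G : R -> R) z dG e : is_derive G (nrm2 z) dG ->
  G (nrm2 z) <> 0 -> G (nrm2 z) + 2 * dG * nrm2 z <> 0 ->
  jac (radial_map G) z (radial_jac_inv (G (nrm2 z)) dG z e) = e.
Proof.
  destruct z as [z1 z2]. intros HG HG0 HD.
  rewrite (jac_radial_map G _ _ dG) by exact HG. now apply radial_jac_invK.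
Qed.

Lemma Psi_preimage a B b1 f y s : a <> 0 -> B <> 0 -> 0 < nrm2 y ->
  Derive_n f 1 s = b1 - B * ln (nrm2 y) / a ^ 2 ->
  let lam := exp (s / 2) / sqrt (nrm2 y) in
  let z := (lam * fst y, lam * snd y) in
  nrm2 z = exp s /\ radial_factor a B b1 (Derive_n f 1) (nrm2 z) = / lam /\ Psi a B b1 f z = y.
Proof.
  intros Ha HB Hy Hs lam z.
  pose proof (sqrt_lt_R0 _ Hy) as Hsq. pose proof (sqrt_sqrt _ (Rlt_le _ _ Hy)) as Hsq2.
  pose proof (exp_pos (s / 2)) as Hes.
  assert (Hz : nrm2 z = exp s).
  { replace (exp s) with (exp (s / 2) * exp (s / 2)) by (rewrite <- exp_plus; f_equal; field).
    unfold z, lam. set (r := sqrt (nrm2 y)) in *.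
    transitivity (exp (s / 2) * exp (s / 2) / (r * r) * nrm2 y).
    - unfold nrm2. simpl. field. lra.
    - rewrite Hsq2. field. lra. }
  assert (HGz : radial_factor a B b1 (Derive_n f 1) (nrm2 z) = / lam).
  { rewrite Hz, (radial_factor_rescale a B b1 _ y) by auto. unfold lam. field. lra. }
  split; [exact Hz | split; [exact HGz|]].
  rewrite Psi_radial. unfold radial_map. rewrite HGz. destruct y as [y1 y2]. unfold z. simpl.
  assert (0 < lam) by (now apply Rdiv_lt_0_compat).
  f_equal; field; lra.
Qed.

Section Pushforward.
Variables (b1 b2 a B : R) (f : R -> R) (T : tensor2).
Hypothesis Hb : 0 < b1 < b2.
Hypothesis HB : 0 < B.
Hypothesis Hf : is_football_potential b1 b2 f.
Hypothesis Ha : is_a b1 b2 a.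
Hypothesis HT : is_pushforward (Psi a B b1 f) (fun z v w => / (b1 ^ 2) * g_foot f z v w) T.

(* Pull back along [Psi]: [y = Psi z] for [z = lam y] on the level set
   [f'(s) = tau], and the standard basis at [y] is the image under [jac Psi]
   of its [radial_jac_inv] at [z]. *)
Lemma comp_T_eval y i j : 0 < nrm2 y -> 0 < b1 - B * ln (nrm2 y) / a ^ 2 < b1 + b2 ->
  Defs.comp T i j y =
  eval B (/ a) ((1 - a * b1) * exp (a * b1)) (/ (a * b1) ^ 2) (metric_expr B i j) y.
Proof.
  intros Hy Ht. assert (Ha0 : 0 < a) by apply Ha.
  set (tau0 := b1 - B * ln (nrm2 y) / a ^ 2) in *.
  destruct (f1_surj b1 b2 f Hf tau0 Ht) as [s Hs].
  destruct (Psi_preimage a B b1 f y s ltac:(lra) ltac:(lra) Hy Hs) as [Hz [HGz HPz]].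
  destruct y as [y1 y2]. cbn [fst snd] in Hz, HGz, HPz.
  set (lam := exp (s / 2) / sqrt (nrm2 (y1, y2))) in *.
  set (z := (lam * y1, lam * y2)) in *.
  assert (Hlam : 0 < lam) by (apply Rdiv_lt_0_compat; [apply exp_pos | now apply sqrt_lt_R0]).
  assert (Hz0 : z <> (0, 0)).
  { intro h. rewrite h in Hz. unfold nrm2 in Hz. simpl in Hz. pose proof (exp_pos s). lra. }
  set (G := radial_factor a B b1 (Derive_n f 1)) in *.
  set (phi := Derive_n f 2 s).
  assert (Hphi : 0 < phi) by apply (f2_pos b1 b2 f Hf).
  set (dG := / lam * (- (a ^ 2 / (2 * B)) * phi / nrm2 z - 1 / (2 * nrm2 z))).
  assert (HG : is_derive G (nrm2 z) dG).
  { unfold dG. rewrite <- HGz. apply radial_factor_derive; [rewrite Hz; apply exp_pos | lra |].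
    rewrite Hz, ln_exp. apply (is_derive_f1 b1 b2 f Hf). }
  assert (Hinv : forall e, jac (Psi a B b1 f) z (radial_jac_inv (/ lam) dG z e) = e).
  { intro e. rewrite (functional_extensionality _ _ (Psi_radial a B b1 f)), <- HGz.
    apply jac_radial_map_inv; auto; rewrite HGz; [apply Rinv_neq_0_compat; lra|].
    replace (/ lam + 2 * dG * nrm2 z) with (- (a ^ 2 / B) * phi / lam)
      by (unfold dG; field; rewrite Hz; pose proof (exp_pos s); repeat split; lra).
    apply Rmult_integral_contrapositive_currified; [|apply Rinv_neq_0_compat; lra].
    assert (0 < a ^ 2 / B) by (apply Rdiv_lt_0_compat; [apply pow_lt|]; lra). nra. }
  unfold Defs.comp.
  replace (T (y1, y2) (ebas i) (ebas j)) with
    (T (Psi a B b1 f z) (jac (Psi a B b1 f) z (radial_jac_inv (/ lam) dG z (ebas i)))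
       (jac (Psi a B b1 f) z (radial_jac_inv (/ lam) dG z (ebas j)))) by now rewrite HPz, !Hinv.
  rewrite (HT z Hz0). unfold g_foot.
  replace (Derive_n f 2 (ln (nrm2 z))) with phi by (now rewrite Hz, ln_exp).
  rewrite eval_metric_expr, Qfun_profile by lra. fold tau0.
  rewrite <- Hs, <- (f2_eq_profile_a b1 b2 f Hb Hf a Ha). fold phi.
  apply pullback_metric_formula; lra.
Qed.
End Pushforward.

(** * Convergence of the parameters *)

Lemma Bc_pos b : 0 < b -> 0 < Bc b.
Proof.
  intro h. unfold Bc. pose proof (exp_ineq1 b ltac:(lra)). pose proof (exp_pos b).
  rewrite exp_Ropp.
  enough ((1 + b) * / exp b < 1) by lra.
  apply (Rmult_lt_reg_r (exp b)); auto. field_simplify; lra.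
Qed.

Lemma Bc_of_is_b c b : is_b c b -> 1 - (1 - b * c) * exp (b * c) = Bc b.
Proof.
  intros [_ H]. unfold Bc.
  replace (1 - b * c) with ((b + 1) * exp (- (b * (1 + c)))) by lra.
  rewrite Rmult_assoc, <- exp_plus. replace (- (b * (1 + c)) + b * c) with (- b) by ring. ring.
Qed.

Section FootballLimit.
Variables (c b : R) (b1 b2 a : nat -> R).
Hypothesis Hc : 0 < c < 1.
Hypothesis Hbc : is_b c b.
Hypothesis Hb12 : forall n, 0 < b1 n < b2 n.
Hypothesis Hratio : is_lim_seq (fun n => b1 n / b2 n) c.
Hypothesis Hb2 : is_lim_seq b2 0.
Hypothesis Ha : forall n, is_a (b1 n) (b2 n) (a n).

Lemma b_pos : 0 < b.
Proof. apply Hbc. Qed.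

Lemma a_pos n : 0 < a n.
Proof. apply Ha. Qed.

Lemma a_b2_lim : is_lim_seq (fun n => a n * b2 n) b.
Proof.
  apply (Fb_root_lim c b (fun n => b1 n / b2 n)); auto.
  - intro n. now apply ratio_in.
  - apply Hbc.
  - apply b_pos.
  - intro n. split.
    + rewrite <- Fb_scaled by auto. apply Ha.
    + pose proof (a_pos n). pose proof (Hb12 n). nra.
Qed.

Lemma a_b1_lim : is_lim_seq (fun n => a n * b1 n) (b * c).
Proof.
  apply (is_lim_seq_ext (fun n => (a n * b2 n) * (b1 n / b2 n))).
  - intro n. pose proof (Hb12 n). field. lra.
  - apply is_lim_seq_mult'; [exact a_b2_lim | exact Hratio].
Qed.

Lemma inv_a_lim : is_lim_seq (fun n => / a n) 0.
Proof.
  apply (is_lim_seq_ext (fun n => b2 n / (a n * b2 n))).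
  - intro n. pose proof (Hb12 n). pose proof (a_pos n). field. lra.
  - pose proof b_pos. replace 0 with (0 / b) by (field; lra).
    apply is_lim_seq_div'; [exact Hb2 | exact a_b2_lim | lra].
Qed.

Lemma coef_lim : is_lim_seq (fun n => (1 - a n * b1 n) * exp (a n * b1 n)) (1 - Bc b).
Proof.
  rewrite <- (Bc_of_is_b c b Hbc). replace (1 - (1 - _)) with ((1 - b * c) * exp (b * c)) by ring.
  apply (is_lim_seq_continuous (fun k => (1 - k) * exp k)); [|exact a_b1_lim].
  apply (is_derive_continuity_pt _ _ (- exp (b * c) + (1 - b * c) * exp (b * c))).
  auto_derive; auto. ring.
Qed.

Lemma kappa_lim : is_lim_seq (fun n => / (a n * b1 n) ^ 2) (/ (b * c) ^ 2).
Proof.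
  pose proof b_pos.
  apply (is_lim_seq_continuous (fun k => / k ^ 2)); [|exact a_b1_lim].
  apply (is_derive_continuity_pt _ _ (- (2 * (b * c)) / ((b * c) ^ 2) ^ 2)).
  assert (Hbc0 : b * c <> 0) by nra.
  auto_derive; [nra|]. field. lra.
Qed.

(* On a fixed annulus [B ln|y|^2 / a] is [o(1)] while [a b1] and [a b2] stay
   away from [0], so the annulus lies in the image [0 < tau < b1 + b2]. *)
Lemma tau_range_eventually rho1 rho2 : 0 < rho1 ->
  eventually (fun n => forall q, rho1 < nrm2 q < rho2 ->
    0 < b1 n - Bc b * ln (nrm2 q) / a n ^ 2 < b1 n + b2 n).
Proof.
  intro Hrho1. pose proof b_pos. pose proof (Bc_pos b b_pos) as HB.
  destruct (bounded_on_nonneg _ _ (bounded_on_norm_log rho1 rho2 Hrho1)) as [M [HM0 HM]].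
  assert (Hu : is_lim_seq (fun n => Bc b * M * / a n) 0).
  { replace 0 with (Bc b * M * 0) by ring. apply (is_lim_seq_scal_l _ _ 0), inv_a_lim. }
  destruct (is_lim_seq_eventually_gt _ (b * c - 0) 0
              (is_lim_seq_minus' _ _ _ _ a_b1_lim Hu) ltac:(nra)) as [N1 H1].
  destruct (is_lim_seq_eventually_gt _ (b - 0) 0
              (is_lim_seq_minus' _ _ _ _ a_b2_lim Hu) ltac:(lra)) as [N2 H2].
  exists (max N1 N2). intros n Hn q Hq.
  specialize (H1 n ltac:(lia)). specialize (H2 n ltac:(lia)).
  specialize (HM q ltac:(lra)). apply Rabs_le_between in HM.
  pose proof (a_pos n) as Han. pose proof (Hb12 n).
  assert (K1 : Bc b * M < a n ^ 2 * b1 n).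
  { apply (Rmult_lt_compat_l (a n)) in H1; [|lra].
    replace (a n * (a n * b1 n - Bc b * M * / a n)) with (a n ^ 2 * b1 n - Bc b * M) in H1
      by (field; lra). lra. }
  assert (K2 : Bc b * M < a n ^ 2 * b2 n).
  { apply (Rmult_lt_compat_l (a n)) in H2; [|lra].
    replace (a n * (a n * b2 n - Bc b * M * / a n)) with (a n ^ 2 * b2 n - Bc b * M) in H2
      by (field; lra). lra. }
  assert (Han2 : 0 < a n ^ 2) by (apply pow_lt; lra).
  replace (b1 n - Bc b * ln (nrm2 q) / a n ^ 2)
    with ((a n ^ 2 * b1 n - Bc b * ln (nrm2 q)) / a n ^ 2) by (field; lra).
  split.
  - apply Rdiv_lt_0_compat; nra.
  - apply (Rmult_lt_reg_r (a n ^ 2)); auto. field_simplify; nra.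
Qed.
End FootballLimit.

Lemma football_base_point b1 b2 a B f : 0 < b1 < b2 -> B <> 0 ->
  is_football_potential b1 b2 f ->
  exists p : pt,
    (p <> (0, 0) /\ snd p = 0 /\ 0 < fst p /\ tau f p = b1) /\
    (forall q : pt, (q <> (0, 0) /\ snd q = 0 /\ 0 < fst q /\ tau f q = b1) -> q = p) /\
    Psi a B b1 f p = (1, 0).
Proof.
  intros Hb HB Hf.
  destruct (f1_surj b1 b2 f Hf b1 ltac:(lra)) as [s Hs].
  pose proof (exp_pos (s / 2)) as Hes.
  assert (Hn : nrm2 (exp (s / 2), 0) = exp s).
  { unfold nrm2. simpl. rewrite Rmult_0_l, Rplus_0_r, Rmult_1_r, <- exp_plus. f_equal. field. }
  assert (Htau : tau f (exp (s / 2), 0) = b1) by (unfold tau; now rewrite Hn, ln_exp).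
  exists (exp (s / 2), 0). split; [|split].
  - split; [intro h; injection h; lra|]. split; [reflexivity|]. split; [simpl; lra | exact Htau].
  - intros [q1 q2] [_ [Hq2 [Hq1 Hqt]]]. simpl in Hq2, Hq1. subst q2.
    unfold tau in Hqt. rewrite <- Hs in Hqt. apply (f1_inj b1 b2 f Hf) in Hqt.
    assert (Hq : q1 * q1 = exp s).
    { rewrite <- Hqt, exp_ln; unfold nrm2; simpl; [ring | nra]. }
    f_equal. rewrite <- sqrt_exp, <- Hq, sqrt_square; lra.
  - unfold Psi. rewrite Htau, Hn, sqrt_exp. simpl.
    replace (a * (a * 1) * (b1 - b1) / (2 * B)) with 0 by (field; auto).
    rewrite exp_0. f_equal; field; lra.
Qed.

Theorem theorem1p3 :
  forall c : R, 0 < c < 1 ->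
  forall b : R, is_b c b ->
  exists C : R, 0 < C /\
  forall (b1 b2 a : nat -> R) (f : nat -> R -> R) (T : nat -> tensor2),
    (forall n, 0 < b1 n < b2 n) ->
    is_lim_seq (fun n => b1 n / b2 n) (Finite c) ->
    is_lim_seq b2 (Finite 0) ->
    (forall n, is_a (b1 n) (b2 n) (a n)) ->
    (forall n, is_football_potential (b1 n) (b2 n) (f n)) ->
    (forall n, is_pushforward (Psi (a n) (Bc b) (b1 n) (f n))
                 (fun z v w => / (b1 n ^ 2) * g_foot (f n) z v w) (T n)) ->
    Cinf_loc_conv T (fun z v w => C * g_cyl z v w) /\
    (forall n, exists p : pt,
        (p <> (0, 0) /\ snd p = 0 /\ 0 < fst p /\ tau (f n) p = b1 n) /\
        (forall q : pt, (q <> (0, 0) /\ snd q = 0 /\ 0 < fst q /\ tau (f n) q = b1 n) -> q = p) /\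
        Psi (a n) (Bc b) (b1 n) (f n) p = (1, 0)).
Proof.
  intros c Hc b Hbc.
  pose proof (b_pos c b Hbc) as Hb. pose proof (Bc_pos b Hb) as HB.
  exists (2 * Bc b * / (b * c) ^ 2). split.
  { apply Rmult_lt_0_compat; [lra | apply Rinv_0_lt_compat, pow_lt; nra]. }
  intros b1 b2 a f T Hb12 Hratio Hb2 Ha Hf HT. split.
  - apply (Cinf_loc_conv_of_expr (Bc b) (1 - Bc b) (/ (b * c) ^ 2) (fun n => / a n)
             (fun n => (1 - a n * b1 n) * exp (a n * b1 n)) (fun n => / (a n * b1 n) ^ 2)
             (metric_expr (Bc b))).
    + exact (inv_a_lim c b b1 b2 a Hc Hbc Hb12 Hratio Hb2 Ha).
    + exact (coef_lim c b b1 b2 a Hc Hbc Hb12 Hratio Ha).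
    + exact (kappa_lim c b b1 b2 a Hc Hbc Hb12 Hratio Ha).
    + lra.
    + intros rho1 rho2 Hrho1.
      destruct (tau_range_eventually c b b1 b2 a Hc Hbc Hb12 Hratio Hb2 Ha rho1 rho2 Hrho1) as [N HN].
      exists N. intros n Hn q i j Hq.
      apply (comp_T_eval (b1 n) (b2 n) (a n) (Bc b) (f n)); auto. lra.
    + intros q i j Hq. apply comp_g_cyl_eval; auto; ring.
  - intro n. apply (football_base_point _ (b2 n)); auto. lra.
Qed.
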